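(* Let $T$ be a tree. No shortest path $(c_0,c_1,\dots,c_r)$ in $\mathcal{C}_3(T)$ contains a pair of opposite edges; that is, there are no indices $i\neq j$ and vertex $v$ such that both steps $c_i\to c_{i+1}$ and $c_j\to c_{j+1}$ change the color of $v$ and $c_{i+1}(v)-c_i(v)=-(c_{j+1}(v)-c_j(v))$ in $\mathbb{Z}/3\mathbb{Z}$.
   Context: Let $T$ be a finite tree with vertex set $V$ and edge set $E$. A proper 3-coloring of $T$ is a map $f\colon V\to\mathbb{Z}/3\mathbb{Z}$ with $f(u)\neq f(v)$ for every edge $uv\in E$. The 3-coloring graph $\mathcal{C}_3(T)$ has the proper 3-colorings as vertices, two colorings adjacent iff they differ at exactly one vertex. An edge $c\to c'$ of $\mathcal{C}_3(T)$ differing at $v$ changes the color of $v$ by $+1$ or by $-1$ in $\mathbb{Z}/3\mathbb{Z}$ (a $(+1)$-toggle or $(-1)$-toggle at $v$). *)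

From mathcomp Require Import all_boot all_order all_algebra.
Set Implicit Arguments. Unset Strict Implicit. Unset Printing Implicit Defensive.
Import GRing.Theory.


Definition simple_graph (V : finType) (e : rel V) : Prop :=
  (symmetric e) /\ (irreflexive e).

Definition is_tree (V : finType) (e : rel V) : Prop :=
  [/\ simple_graph e,
      (forall x y : V, connect e x y) &
      (forall p : seq V, uniq p -> (3 <= size p)%N -> ~~ cycle e p)].

Definition coloring (V : finType) := {ffun V -> 'Z_3}.

Definition proper3 (V : finType) (e : rel V) (f : coloring V) : bool :=
  [forall u, forall v, e u v ==> (f u != f v)].

Definition adjC3 (V : finType) (e : rel V) : rel (coloring V) :=
  fun c c' => [&& proper3 e c, proper3 e c' & #|[set v | c v != c' v]| == 1%N].

(* a walk (c_0, ..., c_r) in C_3(T) is given by its start c0 and the list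
   s = [:: c_1; ...; c_r]; every c_i is proper and consecutive ones are adjacent *)
Definition walkC3 (V : finType) (e : rel V) (c0 : coloring V) (s : seq (coloring V)) : bool :=
  proper3 e c0 && path (adjC3 e) c0 s.

Definition shortest_walkC3 (V : finType) (e : rel V) (c0 : coloring V)
    (s : seq (coloring V)) : Prop :=
  walkC3 e c0 s /\
  (forall s' : seq (coloring V), walkC3 e c0 s' -> last c0 s' = last c0 s ->
    (size s <= size s')%N).

Definition cwalk (V : finType) (c0 : coloring V) (s : seq (coloring V)) (i : nat) :
  coloring V := nth c0 (c0 :: s) i.

(* A walk from c to c' in C_3(T) has, at each vertex x, a net number D x of
   (+1)-toggles minus (-1)-toggles.  Because +1 = -2 in Z/3, a toggle moves the
   height of the integer lift of the coloring by 2, so D is tied to c and c' by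
   an edge-wise equation.  Conversely, on a tree, while D is nonzero some vertex
   can be toggled in the direction of D (an extremal vertex of D that is a sink
   of the orientation induced by c), so c' is reachable in sum_x |D x| steps.
   A walk with two opposite toggles at one vertex has at least sum_x |D x| + 2
   steps, hence is not shortest. *)

From mathcomp Require Import all_boot all_order all_algebra.
From mathcomp Require Import zify ring.
Import Order.TTheory GRing.Theory Num.Theory.
Set Implicit Arguments. Unset Strict Implicit. Unset Printing Implicit Defensive.
Local Open Scope ring_scope.

Ltac Z3_cases :=
  repeat match goal with a : 'Z_3 |- _ => revert a end;
  repeat match goal with |- forall _ : 'Z_3, _ => case=> -[|[|[|//]]] ? end;
  try done; try (intros; do ?split; apply/eqP; done).

Definition zlift (x : 'Z_3) : int := if x == 1 then 1 else if x == -1 then -1 else 0.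

Lemma zliftK (x : 'Z_3) : (zlift x)%:~R = x.
Proof. Z3_cases. Qed.

Lemma zliftN (x : 'Z_3) : zlift (- x) = - zlift x.
Proof. Z3_cases. Qed.

Lemma zlift_unit (x : 'Z_3) : x != 0 -> zlift x = 1 \/ zlift x = -1.
Proof. Z3_cases; move=> _; by [left | right]. Qed.

Lemma zlift_bound (x : 'Z_3) : -1 <= zlift x <= 1.
Proof. Z3_cases. Qed.

Lemma Z3_third (a b d : 'Z_3) : d != 0 -> a != b -> a != b + d -> a = b - d.
Proof. Z3_cases. Qed.

Lemma Z3_add2_neq (a d : 'Z_3) : d != 0 -> a + d + d != a.
Proof. Z3_cases. Qed.

Lemma Z3_toggle_diff (a d : 'Z_3) :
  [/\ a - (a - d) = d, a + d - (a - d) = - d, a - d - a = - d & a - d - (a + d) = d].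
Proof. Z3_cases. Qed.

Lemma Z3_opposite (a b : 'Z_3) :
  a != 0 -> a = - b -> (a == 1) && (b == -1) || (a == -1) && (b == 1).
Proof. Z3_cases. Qed.

Lemma zlift_count (d : 'Z_3) : zlift d = (d == 1)%:Z - (d == -1)%:Z.
Proof. Z3_cases. Qed.

Lemma Z3_neq0_count (d : 'Z_3) : (d != 0) = addn (d == 1) (d == -1) :> nat.
Proof. Z3_cases. Qed.

Lemma sum_zlift (ds : seq 'Z_3) :
  \sum_(d <- ds) zlift d = (count_mem 1 ds)%:Z - (count_mem (-1) ds)%:Z.
Proof.
by elim: ds => [|d ds IH]; rewrite ?big_nil ?big_cons //= IH zlift_count !PoszD; ring.
Qed.

Lemma count_neq0 (ds : seq 'Z_3) :
  count (predC1 0) ds = addn (count_mem 1 ds) (count_mem (-1) ds).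
Proof. by elim: ds => //= d ds ->; rewrite Z3_neq0_count addnACA. Qed.

Lemma abs_sum_zlift_le (ds : seq 'Z_3) :
  (absz (\sum_(d <- ds) zlift d)%R <= count (predC1 0%R) ds)%N.
Proof. rewrite sum_zlift count_neq0; lia. Qed.

Lemma abs_sum_zlift_opposite (ds : seq 'Z_3) : 1 \in ds -> -1 \in ds ->
  (absz (\sum_(d <- ds) zlift d)%R + 2 <= count (predC1 0%R) ds)%N.
Proof. rewrite -!has_pred1 !has_count sum_zlift count_neq0; lia. Qed.

Section ColoringGraph.

Variables (V : finType) (e : rel V).
Hypotheses (e_sym : symmetric e) (e_irr : irreflexive e).

Definition upd (T : Type) (f : {ffun V -> T}) (v : V) (y : T) : {ffun V -> T} :=
  [ffun x => if x == v then y else f x].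

Lemma upd_undo (T : Type) (f g : {ffun V -> T}) v y :
  g = upd f v y -> f = upd g v (f v).
Proof. by move=> ->; apply/ffunP => x; rewrite !ffunE; case: (eqVneq x v) => // ->. Qed.

Lemma proper3P (c : coloring V) :
  reflect (forall u w, e u w -> c u != c w) (proper3 e c).
Proof.
apply: (iffP forallP) => [pc u w euw | pc u].
  by have /forallP/(_ w)/implyP := pc u; apply.
by apply/forallP => w; apply/implyP/pc.
Qed.

Lemma proper3_upd (c : coloring V) v y :
  proper3 e c -> (forall w, e v w -> c w != y) -> proper3 e (upd c v y).
Proof.
move=> /proper3P pc nbr; apply/proper3P => x z; rewrite !ffunE.
case: (eqVneq x v) => [->|xv]; case: (eqVneq z v) => [->|zv] exz.
- by rewrite e_irr in exz.
- by rewrite eq_sym nbr.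
- by rewrite nbr // e_sym.
- exact: pc.
Qed.

Lemma neighbor_of_toggled (c : coloring V) v (d : 'Z_3) w : d != 0 ->
  proper3 e c -> proper3 e (upd c v (c v + d)) -> e v w -> c w = c v - d.
Proof.
move=> dn0 /proper3P pc /proper3P pc' evw.
have wv : w != v by apply: contraTneq evw => ->; rewrite e_irr.
apply: Z3_third; rewrite // eq_sym ?pc //.
by have := pc' v w evw; rewrite !ffunE eqxx (negbTE wv).
Qed.

Lemma adjC3_upd (c : coloring V) v y : c v != y ->
  proper3 e c -> proper3 e (upd c v y) -> adjC3 e c (upd c v y).
Proof.
move=> cvy pc pc'; rewrite /adjC3 pc pc' /=.
suff -> : [set x | c x != upd c v y x] = [set v] by rewrite cards1.
by apply/setP => x; rewrite !inE ffunE; case: (eqVneq x v) => [->|_]; rewrite ?eqxx.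
Qed.

Lemma adjC3_toggle (c c' : coloring V) :
  adjC3 e c c' -> exists2 v, c v != c' v & c' = upd c v (c' v).
Proof.
case/and3P => _ _ /cards1P[v Ev].
have changed x : (c x != c' x) = (x == v) by rewrite -in_set1 -Ev inE.
exists v; first by rewrite changed.
apply/ffunP => x; rewrite ffunE; case: (eqVneq x v) => [->//|xv].
by apply/eqP; rewrite eq_sym; apply/negPn; rewrite changed xv.
Qed.

(* [D x] is the number of (+1)-toggles minus (-1)-toggles still to be made at
   [x]; [zlift (c u - c w)] is the height difference along the edge [uw] of the
   integer lift of [c], and a toggle by [d] at [v] shifts the height of [v] by
   [- 2 * zlift d]. *)
Definition displacement (c ct : coloring V) (D : {ffun V -> int}) : Prop :=
  (forall x, ct x = c x + (D x)%:~R) /\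
  (forall u w, e u w -> 2 * (D u - D w) = zlift (c u - c w) - zlift (ct u - ct w)).

Lemma displacement_toggle (c ct : coloring V) D v (d : 'Z_3) : d != 0 ->
  proper3 e c -> proper3 e (upd c v (c v + d)) -> displacement c ct D ->
  displacement (upd c v (c v + d)) ct (upd D v (D v - zlift d)).
Proof.
move=> dn0 pc pc' [colD edgeD]; split=> [x|u w euw]; rewrite !ffunE.
  by case: (eqVneq x v) => [->|_]; rewrite colD // intrB zliftK; ring.
have nbr := neighbor_of_toggled dn0 pc pc'.
have := edgeD u w euw.
case: (eqVneq u v) euw => [->|uv]; case: (eqVneq w v) => [->|wv] euw.
- by rewrite e_irr in euw.
- rewrite (nbr w euw).
  by case: (Z3_toggle_diff (c v) d) => -> -> _ _; rewrite zliftN; lia.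
- rewrite e_sym in euw; rewrite (nbr u euw).
  by case: (Z3_toggle_diff (c v) d) => _ _ -> ->; rewrite zliftN; lia.
- by [].
Qed.

Definition increments (c : coloring V) (s : seq (coloring V)) (x : V) : seq 'Z_3 :=
  pairmap (fun a b : coloring V => b x - a x) c s.

Definition net_toggles (c : coloring V) (s : seq (coloring V)) : {ffun V -> int} :=
  [ffun x => \sum_(d <- increments c s x) zlift d].

Lemma net_toggles_displacement (c : coloring V) s : proper3 e c -> path (adjC3 e) c s ->
  displacement c (last c s) (net_toggles c s).
Proof.
elim: s c => [|c' s IH] c pc /=.
  by move=> _; split=> [x|u w _]; rewrite !ffunE !big_nil ?mulr0z ?addr0 // subrr mulr0.
case/andP => adj walk; have pc' : proper3 e c' by case/and3P: adj.
have [v cv Ec'] := adjC3_toggle adj; have Ec := upd_undo Ec'.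
have dn0 : c v - c' v != 0 by rewrite subr_eq0.
have -> : net_toggles c (c' :: s) =
    upd (net_toggles c' s) v (net_toggles c' s v - zlift (c v - c' v)).
  apply/ffunP => x; rewrite !ffunE big_cons /=.
  case: (eqVneq x v) => [->|xv]; first by rewrite -[c v - c' v]opprB zliftN opprK addrC.
  by rewrite Ec' ffunE (negbTE xv) subrr add0r.
have := displacement_toggle (v := v) dn0 pc' _ (IH c' pc' walk).
by rewrite (addrC (c' v)) subrK -Ec; apply.
Qed.

Lemma size_walk (c : coloring V) s : path (adjC3 e) c s ->
  size s = (\sum_x count (predC1 0%R) (increments c s x))%N.
Proof.
elim: s c => [|c' s IH] c /=; first by rewrite big1.
case/andP => adj /IH ->.
have one : (\sum_x ((c' x - c x)%R != 0%R))%N = 1%N.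
  case/and3P: adj => _ _ /eqP card1.
  rewrite -[RHS]card1 -sum1dep_card [RHS]big_mkcond /=.
  by apply: eq_bigr => x _; rewrite subr_eq0 eq_sym; case: (_ != _).
by rewrite big_split /= one add1n.
Qed.

Definition l1norm (D : {ffun V -> int}) : nat := \sum_x absz (D x).

Lemma walk_size_opposite (c : coloring V) s v : path (adjC3 e) c s ->
  1 \in increments c s v -> -1 \in increments c s v ->
  (l1norm (net_toggles c s) + 2 <= size s)%N.
Proof.
move=> walk inc1 incN1; rewrite (size_walk walk) /l1norm (bigD1 v) //=.
rewrite [X in (_ <= X)%N](bigD1 v) //= ffunE.
rewrite addnAC; apply: leq_add; first exact: abs_sum_zlift_opposite.
by apply: leq_sum => x _; rewrite ffunE abs_sum_zlift_le.
Qed.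

Lemma l1norm_upd (D : {ffun V -> int}) v k :
  (absz k).+1 = absz (D v) -> (l1norm (upd D v k)).+1 = l1norm D.
Proof.
move=> Dvk; rewrite /l1norm (bigD1 v) //= [RHS](bigD1 v) //= ffunE eqxx -Dvk addSn.
by congr (_ + _)%N.+1; apply: eq_bigr => x /negbTE xv; rewrite ffunE xv.
Qed.

Hypothesis e_acyclic : forall p : seq V, uniq p -> (3 <= size p)%N -> ~~ cycle e p.

Lemma asym_cycle_nil (R : rel V) (q : seq V) : subrel R e ->
  (forall x y, R x y -> ~~ R y x) -> uniq q -> cycle R q -> q = [::].
Proof.
move=> sRe asymR uq cq; case: q uq cq => [//|x [|y [|z q]]] uq cq.
- by move: cq => /= /andP[Rxx _]; have := asymR _ _ Rxx; rewrite Rxx.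
- by move: cq => /= /and3P[Rxy Ryx _]; have := asymR _ _ Rxy; rewrite Ryx.
- by have := e_acyclic uq isT; rewrite (sub_cycle sRe cq).
Qed.

Lemma asym_subrel_sink (R : rel V) (S : {set V}) x0 : subrel R e ->
  (forall x y, R x y -> ~~ R y x) -> x0 \in S ->
  exists2 v, v \in S & forall w, w \in S -> ~~ R v w.
Proof.
move=> sRe asymR Sx0.
have [/exists_inP[v Sv /forall_inP sink]|/exists_inPn noSink] :=
  boolP [exists v in S, [forall w in S, ~~ R v w]]; first by exists v.
pose f x := odflt x [pick w in S | R x w].
have fP x : x \in S -> (f x \in S) && R x (f x).
  rewrite /f => Sx; case: pickP => [w //|none].
  have /forall_inPn[w Sw /negPn Rxw] := noSink x Sx.
  by have := none w; rewrite /= Sw Rxw.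
have iterS k x : x \in S -> iter k f x \in S by elim: k => //= k IH /IH /fP/andP[].
(* Otherwise the orbit of a periodic point of [f] is an [R]-cycle in [S]. *)
have /trajectP[i lt_i Ei] := looping_order f x0; pose y := iter i f x0.
have cyc : fcycle f (orbit f y).
  apply/(orbitPcycle 0 3); exists (order f x0 - i).-1.
  rewrite prednK; last by rewrite subn_gt0.
  by rewrite /y -iterD subnK; [exact: Ei | exact: ltnW].
have Sorb : all (mem S) (orbit f y).
  by apply/allP => z /trajectP[k _ ->]; exact/iterS/iterS.
have Rcyc : cycle R (orbit f y).
  by apply: sub_in_cycle Sorb cyc => x z Sx _ /eqP <-; case/andP: (fP x Sx).
by have := in_orbit f y; rewrite (asym_cycle_nil sRe asymR (orbit_uniq f y) Rcyc).
Qed.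

Lemma toggleable_vertex (c ct : coloring V) D x : displacement c ct D -> D x != 0 ->
  exists v (d : 'Z_3),
    [/\ d != 0, 0 < D v * zlift d & forall w, e v w -> c w != c v + d].
Proof.
move=> [_ edgeD] Dx.
have [d dn0 hx] : exists2 d : 'Z_3, d != 0 & 0 < D x * zlift d.
  by case: (ltrP 0 (D x)) => Dx'; [exists 1 | exists (-1)]; rewrite // /zlift /=; lia.
(* Take a sink, for the orientation [y -> z] iff [c z = c y + d], among the
   maximizers of [D * zlift d]: a neighbour colored [c v + d] would, by the edge
   equation, be a maximizer too. *)
pose h y := D y * zlift d.
have [vm _ hmax] := @arg_maxP _ _ _ x predT h isT.
pose S := [set y | h y == h vm].
pose R := [rel y z | e y z && (c z == c y + d)].
have sRe : subrel R e by move=> y z /andP[].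
have asymR y z : R y z -> ~~ R z y.
  by move=> /andP[_ /eqP czd]; rewrite /= czd eq_sym (negbTE (Z3_add2_neq _ dn0)) andbF.
have Svm : vm \in S by rewrite inE.
have [v Sv sink] := asym_subrel_sink sRe asymR Svm.
move: Sv; rewrite inE => /eqP hv.
exists v, d; split=> // [|w evw]; first by have := hmax x isT; rewrite -hv /h; lia.
apply/negP => /eqP cw.
have Sw : w \in S.
  rewrite inE eq_le; apply/andP; split; first exact: hmax.
  rewrite -hv /h.
  have ewv : e w v by rewrite e_sym.
  have := edgeD w v ewv; rewrite cw (addrC (c v)) addrK.
  have := zlift_bound (ct w - ct v); case: (zlift_unit dn0) => ->; lia.
by have := sink w Sw; rewrite /= evw cw eqxx.
Qed.

Lemma displacement_walk (ct : coloring V) n (c : coloring V) D :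
  proper3 e c -> displacement c ct D -> l1norm D = n ->
  exists s, [/\ path (adjC3 e) c s, last c s = ct & size s = n].
Proof.
elim: n c D => [|n IH] c D pc dispD normD.
  exists [::]; split=> //=; apply/ffunP => x; rewrite (proj1 dispD).
  move/eqP: normD; rewrite sum_nat_eq0 => /forallP/(_ x)/implyP/(_ isT).
  by rewrite absz_eq0 => /eqP ->; rewrite mulr0z addr0.
have [x Dx] : exists x, D x != 0.
  case: (pickP (fun x => D x != 0)) => [x Dx|D0]; first by exists x.
  move: normD; rewrite /l1norm big1 // => x _.
  by have /negbFE/eqP -> := D0 x.
have [v [d [dn0 Dvd nbr]]] := toggleable_vertex dispD Dx.
have pc' := proper3_upd pc nbr.
have [|s [walk lasts sizes]] := IH _ _ pc' (displacement_toggle dn0 pc pc' dispD).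
  apply: succn_inj; rewrite l1norm_upd ?normD //.
  by case: (zlift_unit dn0) Dvd => ->; lia.
exists (upd c v (c v + d) :: s); rewrite /= lasts sizes adjC3_upd ?walk //.
by rewrite eq_sym -subr_eq0 addrAC subrr add0r.
Qed.

End ColoringGraph.

Theorem mainTheorem4 (V : finType) (e : rel V) (c0 : coloring V)
    (s : seq (coloring V)) :
  is_tree e ->
  shortest_walkC3 e c0 s ->
  ~ (exists (i j : nat) (v : V),
       [/\ i != j, (i < size s)%N & (j < size s)%N] /\
       [/\ cwalk c0 s i v != cwalk c0 s i.+1 v,
           cwalk c0 s j v != cwalk c0 s j.+1 v &
           cwalk c0 s i.+1 v - cwalk c0 s i v
             = - (cwalk c0 s j.+1 v - cwalk c0 s j v)]).
Proof.
move=> [[e_sym e_irr] _ e_acyclic] [/andP[pc0 walk] shortest].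
move=> [i [j [v [[_ lt_i lt_j] [ch_i ch_j opp]]]]].
have inc k : (k < size s)%N -> cwalk c0 s k.+1 v - cwalk c0 s k v \in increments c0 s v.
  move=> lt_k; have := @mem_nth _ 0 (increments c0 s v) k.
  by rewrite size_pairmap (nth_pairmap c0) //; apply.
have [inc1 incN1] : 1 \in increments c0 s v /\ -1 \in increments c0 s v.
  have := Z3_opposite _ opp; rewrite subr_eq0 eq_sym => /(_ ch_i).
  case/orP => /andP[/eqP a /eqP b]; split;
    by [rewrite -a; apply: inc | rewrite -b; apply: inc].
have [s' [walk' last' size']] :=
  displacement_walk e_sym e_irr e_acyclic pc0
    (net_toggles_displacement e_sym e_irr pc0 walk) erefl.
have := shortest s'; rewrite /walkC3 pc0 walk' => /(_ isT last').
by have := walk_size_opposite walk inc1 incN1; rewrite size'; lia.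
Qed.
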